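(* Let $R$ be a binary relation on a set $A$. Then every $x\in A$ is sequentially strongly minimalizing if and only if both $\mathbf{RP}(R)$ and $\mathbf{BP}(R)$ hold. (Constructively.)
   Context: Work in constructive (intuitionistic) logic / Martin-Löf type theory without excluded middle or other axioms. Let $R$ be a binary relation on $A$; write $a\to b$ for $R\,a\,b$ and $\to^*$ for its reflexive–transitive closure. $a\in\mathrm{MF}$ ($a$ is a minimal form) iff for all $b$, $a\to^* b$ implies $b\to^* a$. A sequence $s:\mathbb{N}\to A$ is $R$-increasing if $s(k)\to s(k+1)$ for all $k$; it is bounded if there is $b$ with $s(i)\to^* b$ for all $i$. $x$ is sequentially strongly minimalizing if for every $R$-increasing sequence $s$ with $s(0)=x$ there is $i$ with $s(i)\in\mathrm{MF}$. $\mathbf{BP}(R)$: every $R$-increasing sequence is bounded. $\mathbf{RP}(R)$: for every bounded $R$-increasing sequence $s$ there is $i$ such that for all $x$, $s(i)\to^* x$ implies $x\to^* s(i)$. *)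

From Stdlib Require Import Relations.Relation_Operators.

Section Defs.
Variables (A : Type) (R : A -> A -> Prop).

Definition rstar : A -> A -> Prop := clos_refl_trans A R.

Definition MF (a : A) : Prop := forall b, rstar a b -> rstar b a.

Definition increasing (s : nat -> A) : Prop := forall k, R (s k) (s (S k)).

Definition bounded (s : nat -> A) : Prop := exists b, forall i, rstar (s i) b.

Definition seq_strongly_minimalizing (x : A) : Prop :=
  forall s : nat -> A, increasing s -> s 0 = x -> exists i, MF (s i).

Definition BP : Prop := forall s : nat -> A, increasing s -> bounded s.

Definition RP : Prop :=
  forall s : nat -> A, increasing s -> bounded s ->
    exists i, forall x, rstar (s i) x -> rstar x (s i).
End Defs.

Arguments rstar {A} R _ _.
Arguments MF {A} R _.
Arguments increasing {A} R _.
Arguments bounded {A} R _.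
Arguments seq_strongly_minimalizing {A} R _.
Arguments BP {A} R.
Arguments RP {A} R.

From Stdlib Require Import Relations.Relation_Operators Arith.

(* Applied at [x := s 0], sequential strong minimalization of every element
   gives a minimal form [s i] on each increasing sequence [s]; this is RP, and
   [s i] bounds [s]: earlier terms reduce to it, later ones are reducts of it
   and so reduce back to it.  Conversely, RP applied to a sequence bounded by
   BP yields a minimal form on it. *)

Section IncreasingSequences.
Variables (A : Type) (R : A -> A -> Prop) (s : nat -> A).
Hypothesis s_incr : increasing R s.

Lemma increasing_rstar {i j} : i <= j -> rstar R (s i) (s j).
Proof.
  induction 1 as [|j _ IH].
  - apply rt_refl.
  - exact (rt_trans _ _ _ _ _ IH (rt_step _ _ _ _ (s_incr j))).
Qed.

Lemma increasing_MF_bounded i : MF R (s i) -> bounded R s.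
Proof.
  intros MFi. exists (s i). intros j.
  destruct (le_ge_dec j i) as [le_ji | ge_ji].
  - exact (increasing_rstar le_ji).
  - exact (MFi _ (increasing_rstar ge_ji)).
Qed.

End IncreasingSequences.

Arguments increasing_MF_bounded {A R s} s_incr {i}.

Theorem mainTheorem7 (A : Type) (R : A -> A -> Prop) :
  (forall x : A, seq_strongly_minimalizing R x) <-> (RP R /\ BP R).
Proof.
  split.
  - intros SSM. split.
    + intros s s_incr _. exact (SSM (s 0) s s_incr eq_refl).
    + intros s s_incr. destruct (SSM (s 0) s s_incr eq_refl) as [i MFi].
      exact (increasing_MF_bounded s_incr MFi).
  - intros [HRP HBP] x s s_incr _. exact (HRP s s_incr (HBP s s_incr)).
Qed.
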